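(* Let $\mathcal{F}$ be the set of all non-increasing functions $f:[0,1]\to\mathbb{R}$. Then $\mathsf{dis}(\mathcal{F}) \le 2$.
   Context: For a measurable space $\mathcal{X}$ and a class $\mathcal{F}$ of measurable functions $\mathcal{X}\to\mathbb{R}$, the disagreement coefficient is $$\mathsf{dis}(\mathcal{F}) = \sup_{\varepsilon,\delta>0}\ \sup_{\nu\in\Delta(\mathcal{X})} \frac{\delta^2}{\varepsilon^2}\,\mathbb{P}_{p\sim\nu}\Big(\exists f\in\mathcal{F}:\ \mathbb{E}_{q\sim\nu}[f(q)^2]\le\varepsilon^2\ \text{and}\ |f(p)|>\delta\Big),$$ where $\Delta(\mathcal{X})$ is the set of probability measures on $\mathcal{X}$. *)

From HB Require Import structures.
From mathcomp Require Import all_boot all_order all_algebra.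
From mathcomp Require Import all_classical all_reals all_analysis.
Set Implicit Arguments. Unset Strict Implicit. Unset Printing Implicit Defensive.
Import Order.TTheory GRing.Theory Num.Theory.
Local Open Scope classical_set_scope.
Local Open Scope ring_scope.

(* The measurable space X is a (Borel) measurable subset D of R; a
   probability measure on X is a probability measure nu on R with nu D = 1;
   functions X -> R are represented by functions R -> R whose values outside D
   are irrelevant. *)

Definition dis_event (R : realType) (D : set R) (F : set (R -> R))
    (nu : probability R R) (eps delta : R) : set R :=
  [set p | D p /\ exists f, F f /\
      (\int[nu]_(q in D) ((f q) ^+ 2)%:E <= (eps ^+ 2)%:E)%E /\ delta < `|f p|].

Definition dis (R : realType) (D : set R) (F : set (R -> R)) : \bar R :=
  ereal_sup [set r | exists (eps delta : R) (nu : probability R R),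
      [/\ 0 < eps, 0 < delta, nu D = 1%E &
       r = ((delta ^+ 2 / eps ^+ 2)%:E * nu (dis_event D F nu eps delta))%E]].

Definition nonincreasing01 (R : realType) : set (R -> R) :=
  [set f | forall x y, x \in `[0, 1] -> y \in `[0, 1] -> x <= y -> f y <= f x].

(* Split the disagreement event according to the sign of f p.  If an admissible
   f exceeds delta at p, monotonicity makes it exceed delta on all of [0, p], so
   by Chebyshev's inequality each such initial segment of the event has
   nu-measure at most eps^2 / delta^2; these segments exhaust the event from
   below, which therefore obeys the same bound.  The case f p < -delta is
   symmetric, with final segments, and the two halves give the constant 2. *)

From HB Require Import structures.
From mathcomp Require Import all_boot all_order all_algebra.
From mathcomp Require Import all_classical all_reals all_analysis.
From mathcomp Require Import ring.
From mathcomp Require Import measurable_realfun.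
Set Implicit Arguments. Unset Strict Implicit. Unset Printing Implicit Defensive.
Import Order.TTheory GRing.Theory Num.Theory.
Local Open Scope classical_set_scope.
Local Open Scope ring_scope.

Lemma nonincreasing01_measurable (R : realType) (f : R -> R) :
  nonincreasing01 f -> measurable_fun `[(0:R), 1] f.
Proof.
move=> hf.
pose c x : R := Num.min 1 (Num.max 0 x).
have c01 x : c x \in `[(0:R), 1].
  by rewrite in_itv /= /c le_min ler01 le_max lexx ge_min lexx.
have cx x : x \in `[(0:R), 1] -> c x = x.
  by rewrite in_itv /= => /andP[x0 x1]; rewrite /c (max_r x0) (min_r x1).
apply: (eq_measurable_fun (f \o c)).
  by move=> x; rewrite inE /= => xD; rewrite cx.
apply: nonincreasing_measurable => // x y xy /=.
by apply: hf => //; rewrite /c le_min2 // le_max2.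
Qed.

Section MeasureBounds.
Context d (T : measurableType d) (R : realType) (mu : {measure set T -> \bar R}).

Lemma mul_measure_le_integral (D A : set T) (g : T -> R) (c : R) :
  measurable D -> measurable_fun D g -> (forall x, D x -> 0 <= g x) ->
  measurable A -> A `<=` D -> 0 <= c -> (forall x, A x -> c <= g x) ->
  (c%:E * mu A <= \int[mu]_(x in D) (g x)%:E)%E.
Proof.
move=> mD mg g0 mA AD c0 cg.
have -> : (c%:E * mu A = \int[mu]_(x in D) (c * \1_A x)%:E)%E.
  rewrite (integralZl_indic _ (fun=> A)) //=; last by rewrite ltNge c0.
  by rewrite integral_indic // setIidl.
apply: ge0_le_integral => //.
- by move=> x _; rewrite lee_fin mulr_ge0 // indicE; case: (x \in A).
- by apply/measurable_EFinP; apply: measurable_funM => //; exact: measurable_indic.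
- by apply/measurable_EFinP.
move=> x Dx; rewrite lee_fin indicE.
by case: (boolP (x \in A)) => [/set_mem/cg|_]; rewrite ?mulr1 ?mulr0 ?g0.
Qed.

Lemma bigcup_nondecreasing_measure_le (F : (set T)^nat) (t : \bar R) :
  (forall n, measurable (F n)) -> nondecreasing_seq F ->
  (forall n, mu (F n) <= t)%E -> (mu (\bigcup_n F n) <= t)%E.
Proof.
move=> mF ndF Ft.
have cv := nondecreasing_cvg_mu (mu := mu) mF (bigcup_measurable (fun n _ => mF n)) ndF.
rewrite -(cvg_lim _ cv) //; apply: lime_le; first by apply/cvg_ex; exists (mu (\bigcup_n F n)).
exact: nearW.
Qed.

(* When sup g is not attained on S, S is the increasing union of its parts where
   g <= sup g - 1/(n+1), each contained in a sublevel set through a point of S. *)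
Lemma measure_le_sublevel (S : set T) (g : T -> R) (t : \bar R) :
  measurable S -> measurable_fun S g -> has_ubound (g @` S) -> (0 <= t)%E ->
  (forall p, S p -> mu (S `&` g @^-1` `]-oo, g p]) <= t)%E -> (mu S <= t)%E.
Proof.
move=> mS mg S_ub t0 hS.
have [->|/set0P[p0 Sp0]] := eqVneq S set0; first by rewrite measure0.
have gS_sup : has_sup (g @` S) by split=> //; exists (g p0), p0.
set s := sup (g @` S).
have gs x : S x -> g x <= s by move=> Sx; apply: sup_upper_bound => //; exists x.
have sub_le p A : S p -> A `<=` S `&` g @^-1` `]-oo, g p] -> measurable A ->
    (mu A <= t)%E.
  move=> Sp AS mA; apply: le_trans (hS p Sp); apply: le_measure; rewrite ?inE //.
  exact: mg.
have [[p Sp gps]|nomax] := pselect (exists2 p, S p & g p = s).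
  by apply: (sub_le p) => // x Sx; split; rewrite // /preimage /= in_itv /= gps gs.
pose F n := S `&` g @^-1` `]-oo, s - n.+1%:R^-1].
have mF n : measurable (F n) by exact: mg.
have -> : S = \bigcup_n F n.
  apply/seteqP; split=> [x Sx|x [n _ []]] //.
  have xs : g x < s by rewrite lt_neqAle gs // andbT; apply/eqP => gxs; apply: nomax; exists x.
  have [k hk] := ltr_add_invr xs.
  by exists k => //; split; rewrite // /preimage /= in_itv /= lerBrDr ltW.
apply: bigcup_nondecreasing_measure_le => // [m n mn|n].
  apply/subsetPset => x [Sx]; rewrite /= !in_itv /= => h; split => //.
  rewrite /= in_itv /=; apply: (le_trans h); rewrite lerB //.
  by rewrite lef_pV2 ?posrE // ler_nat.
have n_gt0 : 0 < n.+1%:R^-1 :> R by rewrite invr_gt0.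
have [_ [p Sp <-] hp] := sup_adherent n_gt0 gS_sup.
apply: (sub_le p) => // x [Sx]; rewrite /= !in_itv /= => h; split => //.
by rewrite (le_trans h) // ltW.
Qed.

End MeasureBounds.

Section DisagreementSplit.
Context (R : realType) (D : set R) (F : set (R -> R)) (nu : probability R R)
  (eps delta : R).

Definition dis_event_gt : set R :=
  [set p | D p /\ exists f, F f /\
      (\int[nu]_(q in D) ((f q) ^+ 2)%:E <= (eps ^+ 2)%:E)%E /\ delta < f p].

Definition dis_event_lt : set R :=
  [set p | D p /\ exists f, F f /\
      (\int[nu]_(q in D) ((f q) ^+ 2)%:E <= (eps ^+ 2)%:E)%E /\ delta < - f p].

Lemma dis_eventE : dis_event D F nu eps delta = dis_event_gt `|` dis_event_lt.
Proof.
apply/seteqP; split=> p.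
  by move=> [Dp [f [Ff [If]]]]; rewrite ltr_normr => /orP[]; [left|right];
    split=> //; exists f.
by case=> -[Dp [f [Ff [If fp]]]]; split=> //; exists f; rewrite ltr_normr fp ?orbT.
Qed.

End DisagreementSplit.

Section NonincreasingDisagreement.
Context (R : realType) (nu : probability R R) (eps delta : R).
Hypothesis delta_gt0 : 0 < delta.

Let I01 : set R := `[0, 1].
Let E_gt := dis_event_gt I01 (@nonincreasing01 R) nu eps delta.
Let E_lt := dis_event_lt I01 (@nonincreasing01 R) nu eps delta.

Lemma nonincreasing01_chebyshev (f : R -> R) (A : set R) :
  nonincreasing01 f -> (\int[nu]_(q in I01) ((f q) ^+ 2)%:E <= (eps ^+ 2)%:E)%E ->
  measurable A -> A `<=` I01 -> (forall x, A x -> delta < `|f x|) ->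
  (nu A <= (eps ^+ 2 / delta ^+ 2)%:E)%E.
Proof.
move=> Ff If mA AI fA.
rewrite mulrC EFinM lee_pdivlMl ?exprn_gt0 //; apply: le_trans If.
apply: mul_measure_le_integral => //.
- exact: measurable_itv.
- by apply: measurable_funX; exact: nonincreasing01_measurable.
- by move=> x _; exact: sqr_ge0.
- by rewrite sqr_ge0.
move=> x /fA fx; rewrite -[f x ^+ 2]real_normK ?num_real //.
by rewrite ler_sqr ?nnegrE ?normr_ge0 ?(ltW delta_gt0) // ltW.
Qed.

Lemma measurable_dis_event_gt : measurable E_gt.
Proof.
apply: is_interval_measurable => x y [Ix _] [Iy [f [Ff [If fy]]]] z /andP[xz zy].
have Iz : I01 z by apply: (interval_is_interval Ix Iy); rewrite xz.
split=> //; exists f; do 2!split=> //.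
by apply: lt_le_trans fy _; apply: Ff; rewrite ?inE.
Qed.

Lemma measurable_dis_event_lt : measurable E_lt.
Proof.
apply: is_interval_measurable => x y [Ix [f [Ff [If fx]]]] [Iy _] z /andP[xz zy].
have Iz : I01 z by apply: (interval_is_interval Ix Iy); rewrite xz.
split=> //; exists f; do 2!split=> //.
by apply: lt_le_trans fx _; rewrite lerN2; apply: Ff; rewrite ?inE.
Qed.

Lemma measure_dis_event_gt_le : (nu E_gt <= (eps ^+ 2 / delta ^+ 2)%:E)%E.
Proof.
apply: (measure_le_sublevel (g := id)) => //.
- exact: measurable_dis_event_gt.
- by exists 1 => _ [x [+ _] <-]; rewrite /I01 /= in_itv /= => /andP[].
- by rewrite lee_fin divr_ge0 ?sqr_ge0.
move=> p [Ip [f [Ff [If fp]]]]; apply: (nonincreasing01_chebyshev Ff If).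
- by apply: measurableI; [exact: measurable_dis_event_gt|exact: measurable_itv].
- by move=> x [[]].
move=> x [[Ix _]]; rewrite /preimage /= in_itv /= => xp.
by rewrite (lt_le_trans fp) // (le_trans _ (ler_norm _)) // Ff ?inE.
Qed.

Lemma measure_dis_event_lt_le : (nu E_lt <= (eps ^+ 2 / delta ^+ 2)%:E)%E.
Proof.
apply: (measure_le_sublevel (g := fun x : R => - x)) => //.
- exact: measurable_dis_event_lt.
- exact: oppr_measurable.
- by exists 0 => _ [x [+ _] <-]; rewrite /I01 /= in_itv /= oppr_le0 => /andP[].
- by rewrite lee_fin divr_ge0 ?sqr_ge0.
move=> p [Ip [f [Ff [If fp]]]]; apply: (nonincreasing01_chebyshev Ff If).
- by apply: oppr_measurable; [exact: measurable_dis_event_lt|exact: measurable_itv].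
- by move=> x [[]].
move=> x [[Ix _]]; rewrite /preimage /= in_itv /= lerN2 => px.
by rewrite (lt_le_trans fp) // -normrN (le_trans _ (ler_norm _)) // lerN2 Ff ?inE.
Qed.

End NonincreasingDisagreement.

Theorem mainTheorem3 (R : realType) :
  Order.le (dis `[(0:R), 1]%classic (@nonincreasing01 R)) (2%:E).
Proof.
apply: ge_ereal_sup => _ [eps [delta [nu [eps_gt0 delta_gt0 _ ->]]]].
rewrite dis_eventE.
have nuE := le_trans (measureU2 nu (measurable_dis_event_gt nu eps delta)
    (measurable_dis_event_lt nu eps delta))
  (leeD (measure_dis_event_gt_le nu eps delta_gt0)
        (measure_dis_event_lt_le nu eps delta_gt0)).
apply: le_trans (lee_wpmul2l _ nuE) _; first by rewrite lee_fin divr_ge0 ?sqr_ge0.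
rewrite -EFinD -EFinM lee_fin le_eqVlt; apply/orP; left; apply/eqP.
by field; rewrite !lt0r_neq0.
Qed.
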